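(* Let $X\subseteq\mathbb{R}^n$ be compact, let $U_1,U_2\subseteq\mathbb{R}^m$ be compact, let $F:X\times(U_1\cup U_2)\to X$ be continuous, let $R:X\to[0,1]$ be Lipschitz with constant $L_R$, and let $\gamma\in[0,1)$. For $i=1,2$ define the Bellman operator on bounded functions $V:X\to\mathbb{R}$ by $$(\mathcal{T}_iV)(\mathbf{x})=\max_{\mathbf{u}\in U_i}\big[R(F(\mathbf{x},\mathbf{u}))+\gamma V(F(\mathbf{x},\mathbf{u}))\big],$$ and let $V_i^*$ be its unique bounded fixed point (the optimal value function of the discounted problem with action set $U_i$). Suppose $V_1^*$ and $V_2^*$ are Lipschitz with a common Lipschitz constant $L_V$. Then $$\|V_1^*-V_2^*\|_\infty\le\frac{L_R+\gamma L_V}{1-\gamma}\,\max_{\mathbf{x}\in X} d_S\big(\mathcal{R}_F(\mathbf{x},U_1),\mathcal{R}_F(\mathbf{x},U_2)\big).$$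
   Context: The reachable set of $F$ from $\mathbf{x}$ under an action set $U$ is $\mathcal{R}_F(\mathbf{x},U)=\{F(\mathbf{x},\mathbf{u}):\mathbf{u}\in U\}$. For $a\in\mathbb{R}^n$ and $M\subseteq\mathbb{R}^n$, $d(a,M)=\inf_{m\in M}\|a-m\|$; the Hausdorff distance between $M,N\subseteq\mathbb{R}^n$ is $d_S(M,N)=\max\{\sup_{m\in M}d(m,N),\ \sup_{n\in N}d(n,M)\}$. Norms are Euclidean. *)

From HB Require Import structures.
From mathcomp Require Import all_boot all_order all_algebra.
From mathcomp Require Import all_classical all_reals all_analysis.
Set Implicit Arguments. Unset Strict Implicit. Unset Printing Implicit Defensive.
Import Order.TTheory GRing.Theory Num.Theory numFieldNormedType.Exports.
Local Open Scope classical_set_scope.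
Local Open Scope ring_scope.

Definition enorm (R : realType) (k : nat) (v : 'rV[R]_k) : R :=
  Num.sqrt (\sum_(i < k) (v ord0 i) ^+ 2).

Definition reach (R : realType) (n m : nat)
  (F : 'rV[R]_n -> 'rV[R]_m -> 'rV[R]_n) (x : 'rV[R]_n) (U : set 'rV[R]_m)
  : set 'rV[R]_n := [set F x u | u in U].

Definition pt_dist (R : realType) (n : nat) (a : 'rV[R]_n) (M : set 'rV[R]_n) : R :=
  inf [set enorm (a - y) | y in M].

Definition hausdorff (R : realType) (n : nat) (M N : set 'rV[R]_n) : R :=
  Num.max (sup [set pt_dist y N | y in M]) (sup [set pt_dist y M | y in N]).

Definition elipschitz_on (R : realType) (n : nat) (X : set 'rV[R]_n)
  (f : 'rV[R]_n -> R) (L : R) : Prop :=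
  forall x y, X x -> X y -> `|f x - f y| <= L * enorm (x - y).

Definition vbounded_on (R : realType) (n : nat) (X : set 'rV[R]_n)
  (V : 'rV[R]_n -> R) : Prop :=
  exists M : R, forall x, X x -> `|V x| <= M.

Definition bellman_fixed (R : realType) (n m : nat) (X : set 'rV[R]_n)
  (U : set 'rV[R]_m) (F : 'rV[R]_n -> 'rV[R]_m -> 'rV[R]_n)
  (Rw : 'rV[R]_n -> R) (gamma : R) (V : 'rV[R]_n -> R) : Prop :=
  forall x, X x ->
    (exists2 u, U u & V x = Rw (F x u) + gamma * V (F x u)) /\
    (forall u, U u -> Rw (F x u) + gamma * V (F x u) <= V x).

(* Let y = F(x, u1) be an optimal successor of x for V1. Every u in U2 gives
   V2 x >= R(F(x,u)) + gamma V2(F(x,u)), so by the Lipschitz bounds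
   V1 x - V2 x <= (L_R + gamma L_V) |y - F(x,u)| + gamma D with D = sup |V1 - V2|,
   and minimising over u turns |y - F(x,u)| into d(y, R_F(x,U2)), which is at most
   the Hausdorff distance of the reachable sets, hence at most its supremum H over X.
   With the symmetric bound this gives D <= (L_R + gamma L_V) H + gamma D.  Compactness of X
   only makes the suprema finite. *)

From HB Require Import structures.
From mathcomp Require Import all_boot all_order all_algebra.
From mathcomp Require Import all_classical all_reals all_analysis.
From mathcomp Require Import lra.

Set Implicit Arguments. Unset Strict Implicit. Unset Printing Implicit Defensive.

Import Order.TTheory GRing.Theory Num.Theory numFieldNormedType.Exports.
Local Open Scope classical_set_scope.
Local Open Scope ring_scope.

Lemma row_entry_le_normr (R : realType) k (v : 'rV[R]_k) i : `|v ord0 i| <= `|v|.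
Proof.
rewrite [`|v|]mx_normrE.
exact: (le_bigmax _ (fun ij : 'I_1 * 'I_k => `|v ij.1 ij.2|) (ord0, i)).
Qed.

Lemma enorm_le_normr (R : realType) k (v : 'rV[R]_k) :
  enorm v <= Num.sqrt k%:R * `|v|.
Proof.
rewrite -[`|v|]normr_id -sqrtr_sqr -sqrtrM // /enorm ler_sqrt; last first.
  by rewrite mulr_ge0 ?sqr_ge0.
have -> : k%:R * `|v| ^+ 2 = \sum_(i < k) `|v| ^+ 2.
  by rewrite sumr_const card_ord mulr_natl.
apply: ler_sum => i _.
rewrite -real_normK ?num_real //.
by rewrite lerXn2r ?nnegrE ?row_entry_le_normr.
Qed.

Lemma compact_enorm_diam (R : realType) n (X : set 'rV[R]_n) : compact X ->
  exists E, forall y z, X y -> X z -> enorm (y - z) <= E.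
Proof.
move=> /compact_bounded [M [_ HM]].
have XB x : X x -> `|x| <= M + 1 by apply: HM; lra.
exists (Num.sqrt n%:R * ((M + 1) + (M + 1))) => y z Xy Xz.
apply: le_trans (enorm_le_normr (y - z)) _; rewrite ler_wpM2l ?sqrtr_ge0 //.
by apply: le_trans (ler_normB _ _) _; rewrite lerD ?XB.
Qed.

Section PointSetDistance.
Variables (R : realType) (n : nat).
Implicit Types (y z : 'rV[R]_n) (M N : set 'rV[R]_n).

Lemma pt_dist_le y z N : N z -> pt_dist y N <= enorm (y - z).
Proof.
move=> Nz; apply: ge_inf; last by exists z.
by exists 0 => _ [w _ <-]; exact: sqrtr_ge0.
Qed.

Lemma le_mul_pt_dist y N (a K : R) : N !=set0 -> 0 <= K ->
  (forall z, N z -> a <= K * enorm (y - z)) -> a <= K * pt_dist y N.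
Proof.
move=> [z0 Nz0]; rewrite le_eqVlt => /predU1P[<- aK | K0 aK].
  by have := aK _ Nz0; rewrite !mul0r.
rewrite -ler_pdivrMl //; apply: lb_le_inf; first by exists (enorm (y - z0)), z0.
by move=> _ [z Nz <-]; rewrite ler_pdivrMl ?aK.
Qed.

Variables (X : set 'rV[R]_n) (E : R).
Hypothesis diamX : forall y z, X y -> X z -> enorm (y - z) <= E.

Lemma pt_dist_le_diam y N : X y -> N `<=` X -> N !=set0 -> pt_dist y N <= E.
Proof.
by move=> Xy NX [z Nz]; apply: le_trans (pt_dist_le y Nz) (diamX Xy (NX _ Nz)).
Qed.

Lemma has_sup_pt_dist M N : M `<=` X -> N `<=` X -> M !=set0 -> N !=set0 ->
  has_sup [set pt_dist y N | y in M].
Proof.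
move=> MX NX [y My] N0; split; first by exists (pt_dist y N), y.
by exists E => _ [w Mw <-]; apply: pt_dist_le_diam => //; apply: MX.
Qed.

Lemma pt_dist_le_hausdorffl M N y : M `<=` X -> N `<=` X ->
  N !=set0 -> M y -> pt_dist y N <= hausdorff M N.
Proof.
move=> MX NX N0 My; rewrite le_max (sup_upper_bound (has_sup_pt_dist _ _ _ _)) //.
- by exists y.
- by exists y.
Qed.

Lemma hausdorff_le_diam M N : M `<=` X -> N `<=` X -> M !=set0 -> N !=set0 ->
  hausdorff M N <= E.
Proof.
move=> MX NX [y My] [z Nz]; rewrite ge_max; apply/andP; split.
- apply: ge_sup; first by exists (pt_dist y N), y.
  by move=> _ [w Mw <-]; apply: pt_dist_le_diam; [apply: MX | | exists z].
- apply: ge_sup; first by exists (pt_dist z M), z.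
  by move=> _ [w Nw <-]; apply: pt_dist_le_diam; [apply: NX | | exists y].
Qed.

End PointSetDistance.

Lemma hausdorffC (R : realType) n (M N : set 'rV[R]_n) :
  hausdorff M N = hausdorff N M.
Proof. by rewrite /hausdorff maxC. Qed.

Lemma le_sup_image (T : Type) (R : realType) (A : set T) (f : T -> R) (B : R) x :
  (forall y, A y -> f y <= B) -> A x -> f x <= sup [set f y | y in A].
Proof.
move=> fB Ax; apply: sup_upper_bound; last by exists x.
by split; [exists (f x), x | exists B => _ [y Ay <-]; apply: fB].
Qed.

Section BellmanFixedPoints.
Variables (R : realType) (n m : nat) (X : set 'rV[R]_n).
Variables (F : 'rV[R]_n -> 'rV[R]_m -> 'rV[R]_n) (Rw : 'rV[R]_n -> R).
Variables (gamma L_R L_V : R).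
Hypotheses (gamma_ge0 : 0 <= gamma) (L_R_ge0 : 0 <= L_R) (L_V_ge0 : 0 <= L_V).
Hypothesis Rw_lipschitz : elipschitz_on X Rw L_R.

Lemma bellman_gap_le (Ub : set 'rV[R]_m) (Va Vb : 'rV[R]_n -> R) (D : R) x y :
  X y -> Va x = Rw y + gamma * Va y ->
  reach F x Ub `<=` X -> Ub !=set0 ->
  (forall u, Ub u -> Rw (F x u) + gamma * Vb (F x u) <= Vb x) ->
  elipschitz_on X Va L_V ->
  (forall z, X z -> `|Va z - Vb z| <= D) ->
  Va x - Vb x <= (L_R + gamma * L_V) * pt_dist y (reach F x Ub) + gamma * D.
Proof.
move=> Xy Vax reachX Ub0 Vbx LipV VD.
rewrite -lerBlDr; apply: le_mul_pt_dist; first exact: image_nonempty.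
  by rewrite addr_ge0 ?mulr_ge0.
move=> _ [u Ubu <-]; set z := F x u; set t := enorm (y - z).
have Xz : X z by apply: reachX; exists u.
have dR : Rw y - Rw z <= L_R * t.
  exact: le_trans (ler_norm _) (Rw_lipschitz Xy Xz).
have dV : gamma * (Va y - Va z) <= gamma * (L_V * t).
  by rewrite ler_wpM2l // (le_trans (ler_norm _) (LipV _ _ Xy Xz)).
have dD : gamma * (Va z - Vb z) <= gamma * D.
  by rewrite ler_wpM2l // (le_trans (ler_norm _) (VD _ Xz)).
have := Vbx _ Ubu; rewrite Vax -/z mulrDl -mulrA; lra.
Qed.

Variable E : R.
Hypothesis diamX : forall y z, X y -> X z -> enorm (y - z) <= E.

Lemma bellman_fixed_sub_le (Ua Ub : set 'rV[R]_m) (Va Vb : 'rV[R]_n -> R) D x :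
  X x -> reach F x Ua `<=` X -> reach F x Ub `<=` X -> Ub !=set0 ->
  bellman_fixed X Ua F Rw gamma Va -> bellman_fixed X Ub F Rw gamma Vb ->
  elipschitz_on X Va L_V -> (forall z, X z -> `|Va z - Vb z| <= D) ->
  Va x - Vb x <=
    (L_R + gamma * L_V) * hausdorff (reach F x Ua) (reach F x Ub) + gamma * D.
Proof.
move=> Xx reachaX reachbX Ub0 fixVa fixVb LipVa VD.
have [[u Uau Vax] _] := fixVa x Xx; have [_ Vbmax] := fixVb x Xx.
have reach_u : reach F x Ua (F x u) by exists u.
apply: le_trans (bellman_gap_le (reachaX _ reach_u) Vax reachbX Ub0 Vbmax LipVa VD) _.
rewrite lerD2r ler_wpM2l ?addr_ge0 ?mulr_ge0 //.
exact: (pt_dist_le_hausdorffl diamX _ _ (image_nonempty _ Ub0)).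
Qed.

End BellmanFixedPoints.

Theorem lemma1 (R : realType) (n m : nat)
  (X : set 'rV[R]_n) (U1 U2 : set 'rV[R]_m)
  (F : 'rV[R]_n -> 'rV[R]_m -> 'rV[R]_n) (Rw : 'rV[R]_n -> R)
  (L_R L_V gamma : R) (V1 V2 : 'rV[R]_n -> R) :
  compact X -> X !=set0 ->
  compact U1 -> compact U2 -> U1 !=set0 -> U2 !=set0 ->
  {within X `*` (U1 `|` U2), continuous (fun p => F p.1 p.2)} ->
  (forall x u, X x -> (U1 `|` U2) u -> X (F x u)) ->
  (forall x, X x -> 0 <= Rw x <= 1) ->
  0 <= L_R -> elipschitz_on X Rw L_R ->
  0 <= gamma < 1 ->
  vbounded_on X V1 -> bellman_fixed X U1 F Rw gamma V1 ->
  vbounded_on X V2 -> bellman_fixed X U2 F Rw gamma V2 ->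
  0 <= L_V -> elipschitz_on X V1 L_V -> elipschitz_on X V2 L_V ->
  sup [set `|V1 x - V2 x| | x in X] <=
    (L_R + gamma * L_V) / (1 - gamma) *
    sup [set hausdorff (reach F x U1) (reach F x U2) | x in X].
Proof.
move=> cX [x0 X0] _ _ U1n U2n _ FX _ LR0 LipR /andP[g0 g1] [M1 HM1] fix1
  [M2 HM2] fix2 LV0 Lip1 Lip2.
have [E diamX] := compact_enorm_diam cX.
have reachX U x : U `<=` U1 `|` U2 -> X x -> reach F x U `<=` X.
  by move=> UU Xx _ [u Uu <-]; apply: FX => //; apply: UU.
have reach1X x := reachX U1 x (@subsetUl _ U1 U2).
have reach2X x := reachX U2 x (@subsetUr _ U1 U2).
set K := L_R + gamma * L_V.
set D := (S in S <= _); set H := (S in _ <= _ * S).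
have le_D x : X x -> `|V1 x - V2 x| <= D.
  apply: (le_sup_image (f := fun z => `|V1 z - V2 z|) (B := M1 + M2)) => z Xz.
  by apply: le_trans (ler_normB _ _) _; rewrite lerD ?HM1 ?HM2.
have le_D_sym x : X x -> `|V2 x - V1 x| <= D by rewrite distrC; apply: le_D.
have le_H x : X x -> hausdorff (reach F x U1) (reach F x U2) <= H.
  apply: (le_sup_image (f := fun z => hausdorff (reach F z U1) (reach F z U2))
    (B := E)) => z Xz /=.
  apply: (hausdorff_le_diam diamX (reach1X _ Xz) (reach2X _ Xz));
    exact: image_nonempty.
have gap x : X x -> `|V1 x - V2 x| <= K * H + gamma * D.
  move=> Xx; rewrite ler_norml lerNl opprB; apply/andP; split.
  - apply: le_trans (bellman_fixed_sub_le g0 LR0 LV0 LipR diamX Xx (reach2X _ Xx)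
      (reach1X _ Xx) U1n fix2 fix1 Lip2 le_D_sym) _.
    by rewrite hausdorffC lerD2r ler_wpM2l ?le_H ?addr_ge0 ?mulr_ge0.
  - apply: le_trans (bellman_fixed_sub_le g0 LR0 LV0 LipR diamX Xx (reach1X _ Xx)
      (reach2X _ Xx) U2n fix1 fix2 Lip1 le_D) _.
    by rewrite lerD2r ler_wpM2l ?le_H ?addr_ge0 ?mulr_ge0.
have contraction : D <= K * H + gamma * D.
  by apply: ge_sup; [exists `|V1 x0 - V2 x0|, x0 | move=> _ [x Xx <-]; apply: gap].
rewrite mulrAC ler_pdivlMr ?subr_gt0 // mulrBr mulr1 [D * gamma]mulrC.
by rewrite lerBlDr.
Qed.
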